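(* For every integer $\ell\geq 1$ there is a first-order prenex sentence $\varphi_\ell$ over $\tau_{\mathsf{ord}}$ that is true in $L_\ell$ and false in $L_m$ for every $m\geq 1$ with $m\neq \ell$, such that $\varphi_\ell$ has at most $q^*(\ell)+2$ quantifiers and its quantifier prefix strictly alternates between $\exists$ and $\forall$ and ends with $\forall$.
   Context: Vocabulary $\tau_{\mathsf{ord}} = \langle < ;\ \mathsf{min}, \mathsf{max}\rangle$ with $<$ binary and $\mathsf{min},\mathsf{max}$ constants. For $\ell \geq 1$, $L_\ell$ is the linear order with $\ell+1$ elements (its length is $\ell$), with $\mathsf{min},\mathsf{max}$ interpreted as first and last elements. Define $q^*_\forall, q^*_\exists : \mathbb{Z}_{\geq 1}\to\mathbb{N}$ by $q^*_\forall(1)=1$, $q^*_\exists(1)=2$, $q^*_\forall(2)=2$, and $q^*_\exists(2\ell) = q^*_\forall(\ell)+1$ ($\ell\geq 1$); $q^*_\exists(2\ell+1) = q^*_\forall(\ell+1)+1$ ($\ell \geq 1$); $q^*_\forall(2\ell) = q^*_\exists(\ell)+1$ ($\ell\geq 2$); $q^*_\forall(2\ell+1) = q^*_\exists(\ell)+1$ ($\ell\geq 1$). Let $q^*(\ell) = \min(q^*_\exists(\ell), q^*_\forall(\ell))$. *)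

From mathcomp Require Import all_boot.
Set Implicit Arguments. Unset Strict Implicit. Unset Printing Implicit Defensive.

Inductive term : Type :=
  | TVar of nat
  | TMin
  | TMax.

Inductive qfform : Type :=
  | FLt of term & term
  | FEq of term & term
  | FTrue
  | FFalse
  | FNot of qfform
  | FAnd of qfform & qfform
  | FOr of qfform & qfform.

Inductive quant : Type := QEx | QAll.

Definition quant_eqb (a b : quant) : bool :=
  match a, b with QEx, QEx | QAll, QAll => true | _, _ => false end.

(* A prenex formula: a quantifier qprefix [(Q1,x1); ...; (Qn,xn)]
   (outermost first) followed by a quantifier-free matrix. *)
Record prenex : Type := Prenex { qprefix : seq (quant * nat); matrix : qfform }.

Definition fv_term (t : term) : seq nat :=
  match t with TVar x => [:: x] | _ => [::] end.

Fixpoint fv_qf (f : qfform) : seq nat :=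
  match f with
  | FLt t1 t2 | FEq t1 t2 => fv_term t1 ++ fv_term t2
  | FTrue | FFalse => [::]
  | FNot g => fv_qf g
  | FAnd g h | FOr g h => fv_qf g ++ fv_qf h
  end.

Definition is_sentence (phi : prenex) : Prop :=
  forall x, x \in fv_qf (matrix phi) -> x \in map snd (qprefix phi).

Definition alternating_ending_forall (p : seq (quant * nat)) : Prop :=
  let qs := map fst p in
  (forall i, i.+1 < size qs -> quant_eqb (nth QAll qs i) (nth QAll qs i.+1) = false)
  /\ size qs > 0 /\ last QAll qs = QAll.

(* ---------- Semantics in L_m (elements 0..m, i.e. 'I_m.+1) ---------- *)
Definition eval_term (m : nat) (s : nat -> 'I_m.+1) (t : term) : 'I_m.+1 :=
  match t with
  | TVar x => s x
  | TMin => ord0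
  | TMax => ord_max
  end.

Fixpoint eval_qf (m : nat) (s : nat -> 'I_m.+1) (f : qfform) : Prop :=
  match f with
  | FLt t1 t2 => (nat_of_ord (eval_term s t1) < nat_of_ord (eval_term s t2))%N
  | FEq t1 t2 => eval_term s t1 = eval_term s t2
  | FTrue => True
  | FFalse => False
  | FNot g => ~ eval_qf s g
  | FAnd g h => eval_qf s g /\ eval_qf s h
  | FOr g h => eval_qf s g \/ eval_qf s h
  end.

Definition upd (m : nat) (s : nat -> 'I_m.+1) (x : nat) (a : 'I_m.+1) :
  nat -> 'I_m.+1 := fun y => if y == x then a else s y.

Fixpoint eval_prefix (m : nat) (p : seq (quant * nat)) (f : qfform)
    (s : nat -> 'I_m.+1) : Prop :=
  match p with
  | [::] => eval_qf s f
  | (QEx, x) :: p' => exists a : 'I_m.+1, eval_prefix p' f (upd s x a)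
  | (QAll, x) :: p' => forall a : 'I_m.+1, eval_prefix p' f (upd s x a)
  end.

(* L_m |= phi (for a sentence, the initial assignment is irrelevant). *)
Definition holds_in_L (m : nat) (phi : prenex) : Prop :=
  eval_prefix (qprefix phi) (matrix phi) (fun _ => ord0 : 'I_m.+1).

(* qaux fuel l = (q*_exists l, q*_forall l) whenever fuel >= l >= 1. *)
Fixpoint qaux (fuel l : nat) : nat * nat :=
  match fuel with
  | 0 => (0, 0)
  | f.+1 =>
    if l <= 1 then (2, 1)
    else if l == 2 then (2, 2)
    else
      let k := l./2 in
      if odd l then
        ((qaux f k.+1).2 + 1, (qaux f k).1 + 1)
      else
        ((qaux f k).2 + 1, (qaux f k).1 + 1)
  end.

Definition qstar_exists (l : nat) : nat := (qaux l l).1.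
Definition qstar_forall (l : nat) : nat := (qaux l l).2.
Definition qstar (l : nat) : nat := minn (qstar_exists l) (qstar_forall l).

(* Halving pins down distances: [y - x = l] iff some [z] strictly between has
   [z - x = l/2] and [y - z = l - l/2], and dually for [y - x <> l], [<= l] and
   [>= l]. The two halves reuse the same remaining quantifiers: the next,
   universal, variable [w] is checked against the left half when [w <= z] and
   against the right half otherwise, each half holding vacuously outside its
   own window. Negating a half flips its leading
   quantifier, so the four predicates are defined by mutual recursion with
   strictly alternating prefixes, and [n] quantifiers handle every
   [l <= 2 ^ (n - 2)]. As [l <= 2 ^ q*(l)], the sentence [max - min = l] (or,
   for the parity of the prefix, the negation of [max - min <> l]) needs at
   most [q*(l) + 2] quantifiers. *)

From mathcomp Require Import all_boot zify.
From Stdlib Require Import Classical.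
Set Implicit Arguments. Unset Strict Implicit. Unset Printing Implicit Defensive.

Definition dualq (q : quant) : quant := if q is QEx then QAll else QEx.

Fixpoint alt_prefix (q : quant) (n d : nat) : seq (quant * nat) :=
  if n is n'.+1 then (q, d) :: alt_prefix (dualq q) n' d.+1 else [::].

Lemma size_alt_prefix q n d : size (alt_prefix q n d) = n.
Proof. by elim: n q d => [|n IH] q d //=; rewrite IH. Qed.

Lemma alt_prefix_vars q n d : map snd (alt_prefix q n d) = iota d n.
Proof. by elim: n q d => [|n IH] q d //=; rewrite IH. Qed.

Lemma nth_alt_prefix q n d i : i < n ->
  nth QAll (map fst (alt_prefix q n d)) i = if odd i then dualq q else q.
Proof.
elim: n q d i => [|n IH] q d [|i] //= hi.
by rewrite IH //; case: (odd i); case: q.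
Qed.

Lemma alternating_alt_prefix q n d : 0 < n ->
  (if odd n.-1 then dualq q else q) = QAll ->
  alternating_ending_forall (alt_prefix q n d).
Proof.
move=> n_gt0 last_all; rewrite /alternating_ending_forall size_map size_alt_prefix.
split; last split=> //.
- move=> i hi; rewrite !nth_alt_prefix ?(ltnW hi) //=.
  by case: (odd i); case: q {last_all}.
- by rewrite -nth_last size_map size_alt_prefix nth_alt_prefix ?prednK.
Qed.

Definition term_within (e : nat) (t : term) : bool :=
  if t is TVar i then i < e else true.

Fixpoint qf_within (e : nat) (g : qfform) : bool :=
  match g with
  | FLt t1 t2 | FEq t1 t2 => term_within e t1 && term_within e t2
  | FTrue | FFalse => true
  | FNot g => qf_within e g
  | FAnd g h | FOr g h => qf_within e g && qf_within e h
  end.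

Lemma term_within_mono e e' t : e <= e' -> term_within e t -> term_within e' t.
Proof. by case: t => //= i le_ee' lt_ie; apply: leq_trans le_ee'. Qed.

Lemma qf_within_mono e e' g : e <= e' -> qf_within e g -> qf_within e' g.
Proof.
move=> le_ee'; have tm := term_within_mono le_ee'.
by elim: g => //= [t1 t2|t1 t2|g1 IH1 g2 IH2|g1 IH1 g2 IH2] /andP[h1 h2];
  rewrite ?tm ?IH1 ?IH2.
Qed.

Lemma mem_fv_qf_within e g v : qf_within e g -> v \in fv_qf g -> v < e.
Proof.
have tm t : term_within e t -> v \in fv_term t -> v < e.
  by case: t => //= i hi; rewrite inE => /eqP ->.
by elim: g => //= [t1 t2|t1 t2|g1 IH1 g2 IH2|g1 IH1 g2 IH2] /andP[h1 h2];
  rewrite mem_cat => /orP[]; by [apply: tm h1|apply: tm h2|apply: IH1|apply: IH2].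
Qed.

Definition qf_if (g A B : qfform) : qfform := FOr (FAnd g A) (FAnd (FNot g) B).

Definition qf_le (t1 t2 : term) : qfform := FOr (FLt t1 t2) (FEq t1 t2).

Definition window (e : nat) (x y : term) : qfform :=
  FAnd (FLt x (TVar e)) (qf_le (TVar e) y).

Definition split_at (e : nat) (t : term) (P Q : qfform) : qfform :=
  qf_if (qf_le (TVar e) t) P Q.

Definition nothing_between (e : nat) (x y : term) : qfform :=
  FNot (FAnd (FLt x (TVar e)) (FLt (TVar e) y)).

Lemma qf_within_window e x y :
  term_within e x -> term_within e y -> qf_within e.+1 (window e x y).
Proof.
move=> hx hy; have tm := @term_within_mono e e.+1 _ (leqnSn e).
by rewrite /= ltnSn !tm.
Qed.

Lemma qf_within_split_at E e t P Q :
  e < E -> term_within E t -> qf_within E P -> qf_within E Q ->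
  qf_within E (split_at e t P Q).
Proof. by move=> eE tE hP hQ; rewrite /= eE tE hP hQ. Qed.

Local Notation tval s t := (nat_of_ord (eval_term s t)).

Section Semantics.
Variable m : nat.
Implicit Types (s : nat -> 'I_m.+1) (a : 'I_m.+1).

Lemma upd_eq s e a : upd s e a e = a.
Proof. by rewrite /upd eqxx. Qed.

Lemma eval_term_upd s e a t :
  term_within e t -> eval_term (upd s e a) t = eval_term s t.
Proof. by case: t => //= i hi; rewrite /upd ltn_eqF. Qed.

Lemma eval_qf_upd s e a g :
  qf_within e g -> eval_qf (upd s e a) g <-> eval_qf s g.
Proof.
elim: g => //= [t1 t2|t1 t2|g IH|g1 IH1 g2 IH2|g1 IH1 g2 IH2].
- by case/andP=> h1 h2; rewrite !eval_term_upd.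
- by case/andP=> h1 h2; rewrite !eval_term_upd.
- by move/IH=> ->.
- by case/andP=> /IH1 -> /IH2 ->.
- by case/andP=> /IH1 -> /IH2 ->.
Qed.

Definition sat_alt q n d M s : Prop := eval_prefix (alt_prefix q n d) M s.

Lemma sat_alt_ex n d M s :
  sat_alt QEx n.+1 d M s = exists a, sat_alt QAll n d.+1 M (upd s d a).
Proof. by []. Qed.

Lemma sat_alt_all n d M s :
  sat_alt QAll n.+1 d M s = forall a, sat_alt QEx n d.+1 M (upd s d a).
Proof. by []. Qed.

Lemma sat_alt_qf q n d g s : qf_within d g -> sat_alt q n d g s <-> eval_qf s g.
Proof.
elim: n q d s => [|n IH] q d s hg //.
have hg' := qf_within_mono (leqnSn d) hg.
case: q; rewrite ?sat_alt_ex ?sat_alt_all.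
- split=> [[a]|h]; first by rewrite IH // eval_qf_upd.
  by exists ord0; rewrite IH // eval_qf_upd.
- split=> [h|h a]; first by move: (h ord0); rewrite IH // eval_qf_upd.
  by rewrite IH // eval_qf_upd.
Qed.

Lemma sat_alt_andl q n d g R s : qf_within d g ->
  sat_alt q n d (FAnd g R) s <-> eval_qf s g /\ sat_alt q n d R s.
Proof.
elim: n q d s => [|n IH] q d s hg //.
have hg' := qf_within_mono (leqnSn d) hg.
case: q; rewrite ?sat_alt_ex ?sat_alt_all.
- split=> [[a]|[hs [a ha]]]; last by exists a; rewrite IH // eval_qf_upd.
  by rewrite IH // eval_qf_upd // => -[hs ha]; split=> //; exists a.
- split=> [h|[hs h] a]; last by rewrite IH // eval_qf_upd.
  split; first by move: (h ord0); rewrite IH // eval_qf_upd // => -[].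
  by move=> a; move: (h a); rewrite IH // => -[].
Qed.

Lemma sat_alt_if q n d g A B s (b : bool) :
  qf_within d g -> (eval_qf s g <-> b) ->
  sat_alt q n d (qf_if g A B) s <-> sat_alt q n d (if b then A else B) s.
Proof.
elim: n q d s => [|n IH] q d s hg gb.
  rewrite /sat_alt /qf_if /=; case: b gb => gb.
    by have := gb.2 isT; tauto.
  have : ~ eval_qf s g by move=> /gb.
  tauto.
have hg' := qf_within_mono (leqnSn d) hg.
have IHa a : sat_alt (dualq q) n d.+1 (qf_if g A B) (upd s d a) <->
             sat_alt (dualq q) n d.+1 (if b then A else B) (upd s d a).
  by apply: IH; rewrite ?eval_qf_upd.
case: q IHa; rewrite ?sat_alt_ex ?sat_alt_all => /= IHa.
- by split=> -[a]; exists a; apply/IHa.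
- by split=> h a; apply/IHa.
Qed.

Lemma sat_alt_not q n d M s :
  sat_alt q n d (FNot M) s <-> ~ sat_alt (dualq q) n d M s.
Proof.
elim: n q d s => [|n IH] q d s //.
case: q; rewrite ?sat_alt_ex ?sat_alt_all /=.
- split=> [[a] | h]; first by rewrite IH /= => ha h; apply: ha.
  apply: NNPP => hn; apply: h => a; apply: NNPP => ha; apply: hn.
  by exists a; rewrite IH.
- split=> [h [a] | h a]; first by move: (h a); rewrite IH.
  by rewrite IH => ha; apply: h; exists a.
Qed.

Lemma eval_qf_le s t1 t2 : eval_qf s (qf_le t1 t2) <-> tval s t1 <= tval s t2.
Proof.
rewrite /=; split=> [[lt12|->] //|]; first exact: ltnW.
by rewrite leq_eqVlt => /orP[/eqP/val_inj ->|lt12]; [right|left].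
Qed.

Lemma eval_window_upd s e x y a :
  term_within e x -> term_within e y ->
  eval_qf (upd s e a) (window e x y) <-> tval s x < a <= tval s y.
Proof.
move=> hx hy; rewrite /window; cbn [eval_qf]; rewrite eval_qf_le /= upd_eq !eval_term_upd //.
by split=> [[-> ->]|/andP[]].
Qed.

Lemma sat_not_window k e x y R s a :
  term_within e x -> term_within e y -> ~ (tval s x < a <= tval s y) ->
  sat_alt QEx k e.+1 (FNot (FAnd (window e x y) R)) (upd s e a).
Proof.
move=> hx hy ha; rewrite sat_alt_not sat_alt_andl ?qf_within_window //.
by rewrite eval_window_upd // => -[].
Qed.

Lemma sat_split_at k e t P Q s :
  term_within e t ->
  (forall a, tval s t < a -> sat_alt QEx k e.+1 P (upd s e a)) ->
  (forall a, a <= tval s t -> sat_alt QEx k e.+1 Q (upd s e a)) ->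
  sat_alt QAll k.+1 e (split_at e t P Q) s <->
  sat_alt QAll k.+1 e P s /\ sat_alt QAll k.+1 e Q s.
Proof.
move=> ht vacP vacQ; rewrite !sat_alt_all.
have guard a : sat_alt QEx k e.+1 (split_at e t P Q) (upd s e a) <->
               sat_alt QEx k e.+1 (if a <= tval s t then P else Q) (upd s e a).
  apply: sat_alt_if; first by rewrite /= ltnSn (term_within_mono (leqnSn e)).
  by rewrite eval_qf_le /= upd_eq eval_term_upd.
split=> [h|[hP hQ] a]; last by rewrite guard; case: leqP.
by split=> a; move: (h a); rewrite guard; case: leqP => ha //= _; [apply: vacP|apply: vacQ].
Qed.

End Semantics.

Inductive dist_pred := DistGE | DistLE | DistEQ | DistNE.

Definition dist_holds (f : dist_pred) (l D : nat) : Prop :=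
  match f with
  | DistGE => l <= D
  | DistLE => D <= l
  | DistEQ => D = l
  | DistNE => D <> l
  end.

(* With no quantifier left ([n' = 0]), [halves] and [adjacent] would mention the
   unbound variable [d.+1]; they become [FFalse], a branch never taken within
   [dist_in_range]. *)
Fixpoint dist_formula (f : dist_pred) (l n d : nat) (x y : term) : qfform :=
  if n is n'.+1 then
    let z := TVar d in
    let halves f1 l1 f2 l2 :=
      if n' is 0 then FFalse else
      split_at d.+1 z (FNot (dist_formula f1 l1 n' d.+1 x z))
                      (FNot (dist_formula f2 l2 n' d.+1 z y)) in
    let adjacent := if n' is 0 then FFalse else nothing_between d.+1 x y in
    FAnd (window d x y)
    match f with
    | DistGE => if l <= 1 then FTrue
                else FAnd (FLt z y) (halves DistLE l./2.-1 DistLE (l - l./2).-1)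
    | DistLE => if l == 0 then FFalse else if l == 1 then adjacent
                else qf_if (FEq z y) adjacent
                       (halves DistGE l./2.+1 DistGE (l - l./2).+1)
    | DistEQ => if l <= 1 then adjacent
                else FAnd (FLt z y) (halves DistNE l./2 DistNE (l - l./2))
    | DistNE => if l <= 1 then FLt z y
                else qf_if (FEq z y) (FNot (dist_formula DistGE l./2.+1 n' d.+1 x y))
                       (halves DistNE l./2 DistEQ (l - l./2))
    end
  else FFalse.

Lemma sat_split_dist m n e f1 l1 f2 l2 x t y (s : nat -> 'I_m.+1) :
  1 <= n -> term_within e x -> term_within e t -> term_within e y ->
  let P := FNot (dist_formula f1 l1 n e x t) in
  let Q := FNot (dist_formula f2 l2 n e t y) in
  sat_alt QAll n e (if n is 0 then FFalse else split_at e t P Q) s <->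
  sat_alt QAll n e P s /\ sat_alt QAll n e Q s.
Proof.
case: n => // n _ hx ht hy P Q.
apply: sat_split_at => // a ha; apply: sat_not_window => //.
- by case/andP=> _; rewrite leqNgt ha.
- by case/andP; rewrite ltnNge ha.
Qed.

Lemma sat_adjacent m n e x y (s : nat -> 'I_m.+1) :
  1 <= n -> term_within e x -> term_within e y ->
  sat_alt QAll n e (if n is 0 then FFalse else nothing_between e x y) s <->
  tval s y - tval s x <= 1.
Proof.
case: n => // n _ hx hy; rewrite sat_alt_all.
have within : qf_within e.+1 (nothing_between e x y).
  by rewrite /= ltnSn !(term_within_mono (leqnSn e)).
have between b : sat_alt QEx n e.+1 (nothing_between e x y) (upd s e b) <->
                 ~ (tval s x < b < tval s y).
  by rewrite sat_alt_qf //= upd_eq !eval_term_upd //; split=> h /andP.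
split=> [h|gap b]; last by rewrite between; lia.
rewrite leqNgt; apply/negP => gap.
have := h (inord (tval s x).+1); rewrite between inordK; first lia.
by apply: leq_ltn_trans (ltn_ord (eval_term s y)); lia.
Qed.

Definition reach (n : nat) : nat := 2 ^ (n - 2).

Definition dist_in_range (f : dist_pred) (n l : nat) : Prop :=
  match f with
  | DistGE => l <= 1 \/ 2 <= n /\ l <= reach n + 1
  | DistLE => l = 0 \/ 2 <= n /\ l <= reach n
  | DistEQ | DistNE => 1 <= l /\ 2 <= n /\ l <= reach n
  end.

Lemma reach_gt0 n : 0 < reach n.
Proof. by rewrite expn_gt0. Qed.

Lemma reach_succ k : 1 <= k ->
  k = 1 /\ reach k.+1 = 1 \/ 2 <= k /\ reach k.+1 = 2 * reach k.
Proof.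
move=> hk; case: (ltngtP k 1) => [|lt1k|->]; [lia | right; split=> // | by left].
by rewrite /reach subSn // expnS.
Qed.

Section DistFormulaStep.
Variables (m k d : nat) (x y : term) (s : nat -> 'I_m.+1).
Hypotheses (hx : term_within d x) (hy : term_within d y).
Hypothesis hxy : tval s x < tval s y.
Hypothesis IH : forall f l p q (r : nat -> 'I_m.+1),
  1 <= k -> term_within d.+1 p -> term_within d.+1 q -> tval r p < tval r q ->
  dist_in_range f k l ->
  sat_alt QEx k d.+1 (dist_formula f l k d.+1 p q) r <->
  dist_holds f l (tval r q - tval r p).

Local Notation X := (tval s x).
Local Notation Y := (tval s y).
Local Notation z := (TVar d).
Local Notation halves f1 l1 f2 l2 :=
  (if k is 0 then FFalse else
   split_at d.+1 z (FNot (dist_formula f1 l1 k d.+1 x z))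
                   (FNot (dist_formula f2 l2 k d.+1 z y))).

Let hx' : term_within d.+1 x := term_within_mono (leqnSn d) hx.
Let hy' : term_within d.+1 y := term_within_mono (leqnSn d) hy.
Let hz : term_within d.+1 z := ltnSn d.

Lemma tval_cut (a : 'I_m.+1) :
  [/\ tval (upd s d a) x = X, tval (upd s d a) y = Y & tval (upd s d a) z = a].
Proof. by split; rewrite /= ?upd_eq ?eval_term_upd. Qed.

Lemma cut_witness v : v <= Y -> exists a : 'I_m.+1, a = v :> nat.
Proof.
move=> vY; exists (inord v); rewrite inordK //.
exact: leq_ltn_trans vY (ltn_ord _).
Qed.

Lemma sat_lt_cut B (a : 'I_m.+1) :
  sat_alt QAll k d.+1 (FAnd (FLt z y) B) (upd s d a) <->
  a < Y /\ sat_alt QAll k d.+1 B (upd s d a).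
Proof. by rewrite sat_alt_andl /= ?ltnSn ?hy' // upd_eq eval_term_upd. Qed.

Lemma sat_lt_cut_qf (a : 'I_m.+1) :
  sat_alt QAll k d.+1 (FLt z y) (upd s d a) <-> a < Y.
Proof. by rewrite sat_alt_qf /= ?ltnSn ?hy' // upd_eq eval_term_upd. Qed.

Lemma sat_eq_cut A B (a : 'I_m.+1) :
  sat_alt QAll k d.+1 (qf_if (FEq z y) A B) (upd s d a) <->
  sat_alt QAll k d.+1 (if a == Y :> nat then A else B) (upd s d a).
Proof.
apply: sat_alt_if; first by rewrite /= ltnSn hy'.
by rewrite /= upd_eq eval_term_upd //; split=> [-> //|/eqP]; apply: val_inj.
Qed.

Lemma sat_dist_cut B :
  sat_alt QEx k.+1 d (FAnd (window d x y) B) s <->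
  exists a : 'I_m.+1, X < a <= Y /\ sat_alt QAll k d.+1 B (upd s d a).
Proof.
rewrite sat_alt_ex; split=> -[a ha]; exists a; move: ha;
  by rewrite sat_alt_andl ?qf_within_window // eval_window_upd.
Qed.

Lemma sat_not_dist f l p q (r : nat -> 'I_m.+1) :
  1 <= k -> term_within d.+1 p -> term_within d.+1 q -> tval r p < tval r q ->
  dist_in_range f k l ->
  sat_alt QAll k d.+1 (FNot (dist_formula f l k d.+1 p q)) r <->
  ~ dist_holds f l (tval r q - tval r p).
Proof. by move=> *; rewrite sat_alt_not IH. Qed.

Lemma sat_halves f1 l1 f2 l2 (a : 'I_m.+1) :
  1 <= k -> X < a < Y -> dist_in_range f1 k l1 -> dist_in_range f2 k l2 ->
  sat_alt QAll k d.+1 (halves f1 l1 f2 l2) (upd s d a) <->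
  ~ dist_holds f1 l1 (a - X) /\ ~ dist_holds f2 l2 (Y - a).
Proof.
move=> hk /andP[xa ay] r1 r2; have [ex ey ez] := tval_cut a.
by rewrite sat_split_dist // !sat_not_dist ?ex ?ey ?ez.
Qed.

Lemma sat_adjacent_cut (a : 'I_m.+1) : 1 <= k ->
  sat_alt QAll k d.+1 (if k is 0 then FFalse else nothing_between d.+1 x y)
    (upd s d a) <-> Y - X <= 1.
Proof. by move=> hk; have [ex ey _] := tval_cut a; rewrite sat_adjacent // ex ey. Qed.

Lemma sat_dist_GE l : dist_in_range DistGE k.+1 l ->
  sat_alt QEx k.+1 d (dist_formula DistGE l k.+1 d x y) s <-> l <= Y - X.
Proof.
move=> /= hl; cbn [dist_formula]; rewrite sat_dist_cut.
case: (leqP l 1) => [l_le1|l_gt1].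
  split=> [_|_]; first lia.
  have [a ea] := cut_witness (leqnn Y).
  by exists a; rewrite ea hxy leqnn; split=> //; apply/sat_alt_qf.
have hk : 1 <= k by lia.
have := reach_succ hk; have := reach_gt0 k => r0 rk.
split=> [[a [/andP[xa _]]]|le_l].
  by rewrite sat_lt_cut => -[aY]; rewrite sat_halves /=; lia.
have [a ea] := @cut_witness (X + l./2) ltac:(lia).
exists a; split; first lia.
by rewrite sat_lt_cut sat_halves /=; lia.
Qed.

Lemma sat_dist_LE l : dist_in_range DistLE k.+1 l ->
  sat_alt QEx k.+1 d (dist_formula DistLE l k.+1 d x y) s <-> Y - X <= l.
Proof.
move=> /= hl; cbn [dist_formula]; rewrite sat_dist_cut.
case: (posnP l) => [-> | l_gt0] /=.
  by split=> [[a [_]]|]; [rewrite sat_alt_qf | lia].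
have hk : 1 <= k by lia.
have [ay ey] := cut_witness (leqnn Y).
case: eqVneq => [l1|l_ne1].
  split=> [[a [_]]|D]; first by rewrite sat_adjacent_cut //; lia.
  by exists ay; rewrite ey hxy leqnn sat_adjacent_cut //; split=> //; lia.
have := reach_succ hk; have := reach_gt0 k => r0 rk.
split=> [[a [/andP[xa aY]]]|D].
  rewrite sat_eq_cut; case: eqP => [aY'|aY']; first by rewrite sat_adjacent_cut //; lia.
  by rewrite sat_halves /=; lia.
case: (leqP (Y - X) 1) => D1.
  by exists ay; rewrite ey hxy leqnn sat_eq_cut ey eqxx sat_adjacent_cut.
have [a ea] := @cut_witness (maxn X.+1 (Y - (l - l./2))) ltac:(lia).
exists a; split; first lia.
rewrite sat_eq_cut; case: eqP => [|_]; first lia.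
by rewrite sat_halves /=; lia.
Qed.

Lemma sat_dist_EQ l : dist_in_range DistEQ k.+1 l ->
  sat_alt QEx k.+1 d (dist_formula DistEQ l k.+1 d x y) s <-> Y - X = l.
Proof.
move=> /= hl; cbn [dist_formula]; rewrite sat_dist_cut.
have hk : 1 <= k by lia.
case: (leqP l 1) => [l_le1|l_gt1].
  split=> [[a [_]]|D]; first by rewrite sat_adjacent_cut //; lia.
  have [a ea] := cut_witness (leqnn Y).
  by exists a; rewrite ea hxy leqnn sat_adjacent_cut //; split=> //; lia.
have := reach_succ hk; have := reach_gt0 k => r0 rk.
split=> [[a [/andP[xa _]]]|D].
  by rewrite sat_lt_cut => -[aY]; rewrite sat_halves /=; lia.
have [a ea] := @cut_witness (X + l./2) ltac:(lia).
exists a; split; first lia.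
by rewrite sat_lt_cut sat_halves /=; lia.
Qed.

Lemma sat_dist_NE l : dist_in_range DistNE k.+1 l ->
  sat_alt QEx k.+1 d (dist_formula DistNE l k.+1 d x y) s <-> Y - X <> l.
Proof.
move=> /= hl; cbn [dist_formula]; rewrite sat_dist_cut.
have hk : 1 <= k by lia.
case: (leqP l 1) => [l_le1|l_gt1].
  split=> [[a [/andP[xa _]]]|D]; first by rewrite sat_lt_cut_qf; lia.
  have [a ea] := @cut_witness X.+1 ltac:(lia).
  by exists a; rewrite sat_lt_cut_qf; lia.
have := reach_succ hk; have := reach_gt0 k => r0 rk.
have whole (a : 'I_m.+1) :
    sat_alt QAll k d.+1 (FNot (dist_formula DistGE l./2.+1 k d.+1 x y)) (upd s d a) <->
    Y - X <= l./2.
  have [ex ey _] := tval_cut a.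
  by rewrite sat_not_dist ?ex ?ey //=; lia.
split=> [[a [/andP[xa aY]]]|D].
  rewrite sat_eq_cut; case: eqP => [aY'|aY']; first by rewrite whole; lia.
  by rewrite sat_halves /=; lia.
case: (leqP (Y - X) l./2) => D'.
  have [a ea] := cut_witness (leqnn Y).
  by exists a; rewrite ea hxy leqnn sat_eq_cut ea eqxx whole.
have [a ea] := @cut_witness (X + l./2) ltac:(lia).
exists a; split; first lia.
rewrite sat_eq_cut; case: eqP => [|_]; first lia.
by rewrite sat_halves /=; lia.
Qed.

End DistFormulaStep.

Lemma sat_dist_formula m n f l d x y (s : nat -> 'I_m.+1) :
  1 <= n -> term_within d x -> term_within d y -> tval s x < tval s y ->
  dist_in_range f n l ->
  sat_alt QEx n d (dist_formula f l n d x y) s <-> dist_holds f l (tval s y - tval s x).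
Proof.
elim: n f l d x y s => [//|k IH] f l d x y s _ hx hy hxy.
have IHk f' l' := IH f' l' d.+1.
case: f => hl.
- exact: (sat_dist_GE hx hy hxy IHk).
- exact: (sat_dist_LE hx hy hxy IHk).
- exact: (sat_dist_EQ hx hy hxy IHk).
- exact: (sat_dist_NE hx hy hxy IHk).
Qed.

Lemma qf_within_dist f l n d x y :
  term_within d x -> term_within d y -> qf_within (d + n) (dist_formula f l n d x y).
Proof.
elim: n f l d x y => [|n IH] f l d x y hx hy //.
have dn : d < d + n.+1 by rewrite addnS ltnS leq_addr.
have tw t : term_within d t -> term_within (d + n.+1) t.
  by apply: term_within_mono; apply: ltnW.
have sub f' l' p q : term_within d.+1 p -> term_within d.+1 q ->
    qf_within (d + n.+1) (dist_formula f' l' n d.+1 p q).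
  by rewrite -addSnnS; apply: IH.
have hx' := term_within_mono (leqnSn d) hx; have hy' := term_within_mono (leqnSn d) hy.
have hz : term_within d.+1 (TVar d) := ltnSn d.
have guard g : (d.+1 < d + n.+1 -> qf_within (d + n.+1) g) ->
    qf_within (d + n.+1) (if n is 0 then FFalse else g).
  by case: (n) => // n'; apply; rewrite !addnS !ltnS leq_addr.
have halves f1 l1 f2 l2 : qf_within (d + n.+1) (if n is 0 then FFalse else
    split_at d.+1 (TVar d) (FNot (dist_formula f1 l1 n d.+1 x (TVar d)))
                           (FNot (dist_formula f2 l2 n d.+1 (TVar d) y))).
  by apply: guard => d1; apply: qf_within_split_at; rewrite //= ?dn ?sub.
have adjacent : qf_within (d + n.+1) (if n is 0 then FFalse else nothing_between d.+1 x y).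
  by apply: guard => d1; rewrite /= d1 !tw.
cbn [dist_formula qf_within qf_if].
rewrite (qf_within_mono dn (qf_within_window hx hy)).
by case: f; repeat case: ifP => _; cbn [qf_within qf_if term_within];
  rewrite ?dn ?tw ?halves ?adjacent ?sub.
Qed.

Lemma is_sentence_alt q n M :
  qf_within n M -> is_sentence (Prenex (alt_prefix q n 0) M).
Proof.
move=> hM v /= /(mem_fv_qf_within hM) vn.
by rewrite alt_prefix_vars mem_iota.
Qed.

Lemma holds_in_L_alt m q n M :
  holds_in_L m (Prenex (alt_prefix q n 0) M) <->
  sat_alt q n 0 M (fun _ => ord0 : 'I_m.+1).
Proof. by []. Qed.

Lemma sat_dist_in_L m f l n : 1 <= m -> 1 <= n -> dist_in_range f n l ->
  sat_alt QEx n 0 (dist_formula f l n 0 TMin TMax) (fun _ => ord0 : 'I_m.+1) <->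
  dist_holds f l m.
Proof. by move=> hm hn hl; rewrite sat_dist_formula //= subn0. Qed.

(* The bound [l <= 2 ^ q] alone is not inductive, because of the step
   [q*_forall (2k+1) = q*_exists k + 1]. *)
Lemma qaux_exp2_bound fuel l : 1 <= l <= fuel ->
  3 * l + 2 <= 2 ^ ((qaux fuel l).1 + 1) /\ 3 * l + 1 <= 2 ^ ((qaux fuel l).2 + 1).
Proof.
elim: fuel l => [|fuel IH] l hl; first lia.
have exp2S e : 2 ^ (e + 1 + 1) = 2 * 2 ^ (e + 1) by rewrite (addn1 (e + 1)) expnS.
rewrite /=; case: (leqP l 1) => l_le1; first by rewrite /=; lia.
case: eqVneq => [-> //|l_ne2].
have := odd_double_half l; rewrite -mul2n.
case: (odd l) => /= hl2.
- have [A1 A2] := IH l./2.+1 ltac:(lia); have [B1 B2] := IH l./2 ltac:(lia).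
  rewrite !exp2S; lia.
- have [B1 B2] := IH l./2 ltac:(lia).
  rewrite !exp2S; lia.
Qed.

Lemma le_exp2_qstar l : 1 <= l -> l <= 2 ^ qstar l.
Proof.
move=> hl; have [qE qA] := @qaux_exp2_bound l l ltac:(lia).
rewrite /qstar /qstar_exists /qstar_forall /minn.
by case: ifP => _; move: qE qA; rewrite !addn1 !expnS; lia.
Qed.

Theorem mainTheorem5 (l : nat) (hl : 1 <= l) :
  exists phi : prenex,
    is_sentence phi /\
    alternating_ending_forall (qprefix phi) /\
    size (qprefix phi) <= qstar l + 2 /\
    holds_in_L l phi /\
    (forall m : nat, 1 <= m -> m <> l -> ~ holds_in_L m phi).
Proof.
set q := qstar l; set n := q + 2.
have n_ge2 : 2 <= n by rewrite /n addn2.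
have n_gt0 : 0 < n := ltnW n_ge2.
have l_reach : l <= reach n by rewrite /reach /n addnK; apply: le_exp2_qstar.
have hrange f : f = DistEQ \/ f = DistNE -> dist_in_range f n l.
  by case=> -> /=; lia.
have scoped f : qf_within n (dist_formula f l n 0 TMin TMax).
  exact: (@qf_within_dist f l n 0).
have n_pred : n.-1 = q.+1 by rewrite /n addn2.
case q_odd: (odd q).
- exists (Prenex (alt_prefix QAll n 0) (FNot (dist_formula DistNE l n 0 TMin TMax))).
  split; first exact: is_sentence_alt (scoped _).
  split; first by apply: alternating_alt_prefix; [lia | rewrite n_pred /= q_odd].
  split; first by rewrite size_alt_prefix.
  by split=> [|m hm neq]; rewrite holds_in_L_alt sat_alt_not sat_dist_in_L ?hrange //= => /(_ neq).
- exists (Prenex (alt_prefix QEx n 0) (dist_formula DistEQ l n 0 TMin TMax)).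
  split; first exact: is_sentence_alt (scoped _).
  split; first by apply: alternating_alt_prefix; [lia | rewrite n_pred /= q_odd].
  split; first by rewrite size_alt_prefix.
  by split=> [|m hm neq]; rewrite holds_in_L_alt sat_dist_in_L ?hrange //=; left.
Qed.
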